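(* (Coinduction principle.) Let $\Sigma$ be a first-order signature, $\varphi(X_1,\ldots,X_m)$ a standard formula over $\Sigma$ with free relational variables among $X_1,\ldots,X_m$ and no free individual variables, and $\mathbb{A}$ a $\Sigma$-structure. Let $R_1,\ldots,R_m$ be coinductive relations on (the carrier of) $\mathbb{A}$ with arities matching those of $X_1,\ldots,X_m$, with approximants $R_i^\alpha$. Suppose that for every ordinal $\alpha$, if $\mathbb{A}\models\varphi(R_1^\alpha,\ldots,R_m^\alpha)$ then $\mathbb{A}\models\varphi(R_1^{\alpha+1},\ldots,R_m^{\alpha+1})$. Then $\mathbb{A}\models\varphi(R_1^\alpha,\ldots,R_m^\alpha)$ for every ordinal $\alpha$; in particular $\mathbb{A}\models\varphi(R_1,\ldots,R_m)$.
   Context: Formulas are first-order formulas over $\Sigma$ additionally allowing free (never bound) relational variables; quantification is only over individuals. A formula is standard if it is equivalent to a conjunction of formulas of the form $\forall x_1\ldots\forall x_n\big(\psi(x_1,\ldots,x_n,X_1,\ldots,X_m)\to X_{i_1}(t^1_1,\ldots,t^1_{n_1})\land\cdots\land X_{i_k}(t^k_1,\ldots,t^k_{n_k})\big)$ with $\psi$ quantifier-free and $t^j_l$ terms. An $n$-ary relation $R\subseteq A^n$ is coinductive if it is the greatest fixpoint of a (specified) monotone $F:\mathcal{P}(A^n)\to\mathcal{P}(A^n)$; its approximants (the final sequence of $F$) are $R^0=A^n$, $R^{\alpha+1}=F(R^\alpha)$, and $R^\lambda=\bigcap_{\alpha<\lambda}R^\alpha$ for limit ordinals $\lambda$. $\varphi(R_1,\ldots,R_m)$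 denotes $\varphi$ with each $X_i$ interpreted as $R_i$. *)

From Stdlib Require Import List.
From mathcomp Require Import all_boot.
Set Implicit Arguments.
Unset Strict Implicit.
Unset Printing Implicit Defensive.

Record signature := Signature {
  fsym : Type;  farity : fsym -> nat;   (* function symbols (constants: arity 0) *)
  rsym : Type;  rarity : rsym -> nat }.

Record structure (S : signature) := Structure {
  carrier :> Type;
  fun_interp : forall f : fsym S, ('I_(farity f) -> carrier) -> carrier;
  rel_interp : forall r : rsym S, ('I_(rarity r) -> carrier) -> Prop }.

Definition nrel (A : Type) (n : nat) := ('I_n -> A) -> Prop.

Inductive term (S : signature) : Type :=
| tvar : nat -> term S
| tapp : forall f : fsym S, ('I_(farity f) -> term S) -> term S.

(* Formulas over S with free relational variables taken from V,
   variable X : V having arity var_ar X. Quantifiers range over individuals. *)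
Inductive formula (S : signature) (V : Type) (var_ar : V -> nat) : Type :=
| fTrue | fFalse
| fEq : term S -> term S -> @formula S V var_ar
| fRel : forall r : rsym S, ('I_(rarity r) -> term S) -> @formula S V var_ar
| fVar : forall X : V, ('I_(var_ar X) -> term S) -> @formula S V var_ar
| fNot : @formula S V var_ar -> @formula S V var_ar
| fAnd : @formula S V var_ar -> @formula S V var_ar -> @formula S V var_ar
| fOr  : @formula S V var_ar -> @formula S V var_ar -> @formula S V var_ar
| fImp : @formula S V var_ar -> @formula S V var_ar -> @formula S V var_ar
| fAll : nat -> @formula S V var_ar -> @formula S V var_ar
| fEx  : nat -> @formula S V var_ar -> @formula S V var_ar.

Arguments formula S {V} var_ar.
Arguments fTrue {S V var_ar}.
Arguments fFalse {S V var_ar}.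

Section Syntax.
Variables (S : signature) (V : Type) (var_ar : V -> nat).

Fixpoint occurs_term (x : nat) (t : term S) : Prop :=
  match t with
  | tvar y => y = x
  | tapp f args => exists i, occurs_term x (args i)
  end.

Fixpoint occurs_free (x : nat) (phi : formula S var_ar) : Prop :=
  match phi with
  | fTrue | fFalse => False
  | fEq t u => occurs_term x t \/ occurs_term x u
  | fRel r args => exists i, occurs_term x (args i)
  | fVar X args => exists i, occurs_term x (args i)
  | fNot p => occurs_free x p
  | fAnd p q | fOr p q | fImp p q => occurs_free x p \/ occurs_free x q
  | fAll y p | fEx y p => y <> x /\ occurs_free x p
  end.

Definition closed_formula (phi : formula S var_ar) : Prop :=
  forall x, ~ occurs_free x phi.

Fixpoint quantifier_free (phi : formula S var_ar) : Prop :=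
  match phi with
  | fTrue | fFalse | fEq _ _ | fRel _ _ | fVar _ _ => True
  | fNot p => quantifier_free p
  | fAnd p q | fOr p q | fImp p q => quantifier_free p /\ quantifier_free q
  | fAll _ _ | fEx _ _ => False
  end.

Fixpoint foralls (xs : seq nat) (phi : formula S var_ar) : formula S var_ar :=
  match xs with
  | [::] => phi
  | x :: xs' => fAll x (foralls xs' phi)
  end.

Definition var_atom := {X : V & 'I_(var_ar X) -> term S}.

Definition atom_formula (a : var_atom) : formula S var_ar :=
  fVar (projT2 a).

Definition big_and (ps : seq (formula S var_ar)) : formula S var_ar :=
  foldr (@fAnd S V var_ar) fTrue ps.

(* A basic standard clause  forall xs (psi -> X_{i1}(..) /\ ... /\ X_{ik}(..)) *)
Record clause := Clause {
  cl_vars : seq nat;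
  cl_pre : formula S var_ar;           (* psi, required quantifier-free *)
  cl_atoms : seq var_atom }.

Definition clause_formula (c : clause) : formula S var_ar :=
  foralls (cl_vars c) (fImp (cl_pre c) (big_and (map atom_formula (cl_atoms c)))).

End Syntax.

Section Semantics.
Variables (S : signature) (M : structure S).

Fixpoint eval (e : nat -> M) (t : term S) : M :=
  match t with
  | tvar x => e x
  | tapp f args => fun_interp (fun i => eval e (args i))
  end.

Definition update (e : nat -> M) (x : nat) (a : M) : nat -> M :=
  fun y => if y == x then a else e y.

Fixpoint sat (V : Type) (var_ar : V -> nat)
    (I : forall X : V, nrel M (var_ar X)) (e : nat -> M)
    (phi : formula S var_ar) : Prop :=
  match phi with
  | fTrue => True
  | fFalse => False
  | fEq t u => eval e t = eval e u
  | fRel r args => rel_interp (fun i => eval e (args i))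
  | fVar X args => I X (fun i => eval e (args i))
  | fNot p => ~ sat I e p
  | fAnd p q => sat I e p /\ sat I e q
  | fOr p q => sat I e p \/ sat I e q
  | fImp p q => sat I e p -> sat I e q
  | fAll x p => forall a : M, sat I (update e x a) p
  | fEx x p => exists a : M, sat I (update e x a) p
  end.

(* M |= phi(I) : for a closed phi, truth does not depend on the assignment. *)
Definition models (V : Type) (var_ar : V -> nat)
    (I : forall X : V, nrel M (var_ar X)) (phi : formula S var_ar) : Prop :=
  forall e : nat -> M, sat I e phi.

End Semantics.

Definition standard (S : signature) (V : Type) (var_ar : V -> nat)
    (phi : formula S var_ar) : Prop :=
  exists cs : seq (@clause S V var_ar),
    (forall c, List.In c cs -> quantifier_free (cl_pre c)) /\
    forall (M : structure S) (I : forall X : V, nrel M (var_ar X)) (e : nat -> M),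
      sat I e phi <-> sat I e (big_and (map (@clause_formula S V var_ar) cs)).

Definition monotone_op (A : Type) (n : nat) (F : nrel A n -> nrel A n) : Prop :=
  forall P Q : nrel A n, (forall x, P x -> Q x) -> forall x, F P x -> F Q x.

Definition is_gfp (A : Type) (n : nat) (F : nrel A n -> nrel A n) (R : nrel A n) : Prop :=
  (forall x, R x <-> F R x) /\
  (forall P : nrel A n, (forall x, P x <-> F P x) -> forall x, P x -> R x).

(* Ordinals, represented as (generalised) Brouwer trees: every ordinal is the
   rank of some tree; [olim I f] denotes the supremum of the [f i]. *)
Inductive bord : Type :=
| ozero : bord
| osucc : bord -> bord
| olim : forall I : Type, (I -> bord) -> bord.

Fixpoint approx (A : Type) (n : nat) (F : nrel A n -> nrel A n) (a : bord) : nrel A n :=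
  match a with
  | ozero => fun _ => True
  | osucc b => F (approx F b)
  | @olim J f => fun x => forall i : J, approx F (f i) x
  end.

From mathcomp Require Import all_boot.
From Stdlib Require Import Classical ClassicalEpsilon.

(* Standard formulas pass to intersections of chains of interpretations: along
   a descending chain the quantifier-free premise of each clause eventually
   takes the truth value it has at the intersection, and the conclusion, a
   conjunction of positive atoms, then holds all the way down the chain, hence
   at the intersection.  Any two approximants are comparable, so phi survives
   limit stages (the intersection of the earlier stages) and, by hypothesis,
   successor stages.  The greatest fixpoint is itself the intersection of all
   approximants, because the approximants stabilise. *)

Definition interp (M : Type) {V : Type} (ar : V -> nat) := forall X : V, nrel M (ar X).

Definition sub_interp {M V : Type} {ar : V -> nat} (I1 I2 : interp M ar) : Prop :=
  forall (X : V) x, I1 X x -> I2 X x.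

Section Satisfaction.
Variables (S : signature) (M : structure S) (V : Type) (ar : V -> nat).

Lemma sat_big_and (I : interp M ar) e (ps : seq (formula S ar)) :
  sat I e (big_and ps) <-> forall p, List.In p ps -> sat I e p.
Proof.
elim: ps => [|p ps IHps] /=; first by split=> // _ p [].
rewrite IHps; split=> [[Hp Hps] q [<-|Hq] // | H]; first exact: Hps.
by split=> [|q Hq]; apply: H; [left|right].
Qed.

Lemma sat_var_atoms (I : interp M ar) e (atoms : seq (var_atom S ar)) :
  sat I e (big_and (map (@atom_formula S V ar) atoms)) <->
  forall a, List.In a atoms -> I (projT1 a) (fun i => eval e (projT2 a i)).
Proof.
elim: atoms => [|[X args] atoms IHatoms] /=; first by split=> // _ a [].
rewrite IHatoms; split=> [[Ha Has] b [<-|Hb] // | H]; first exact: Has.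
split=> [|b Hb]; first exact: (H (existT _ X args) (or_introl erefl)).
by apply: H; right.
Qed.

End Satisfaction.

Section ChainMeet.
Context {S : signature} {M : structure S} {V : Type} {ar : V -> nat} {K : Type}.
Variables (J : K -> interp M ar) (I0 : interp M ar).
Hypothesis I0_meet : forall (X : V) x, I0 X x <-> forall k, J k X x.
Hypothesis J_chain : forall k k', sub_interp (J k) (J k') \/ sub_interp (J k') (J k).

Definition eventually (P : K -> Prop) : Prop :=
  forall k0, exists2 k, sub_interp (J k) (J k0) &
    forall k', sub_interp (J k') (J k) -> P k'.

Lemma eventually_always {P : K -> Prop} : (forall k, P k) -> eventually P.
Proof. by move=> HP k0; exists k0. Qed.

Lemma eventually_from k1 {P : K -> Prop} :
  (forall k, sub_interp (J k) (J k1) -> P k) -> eventually P.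
Proof.
move=> HP k0; case: (J_chain k0 k1) => [H01|H10]; last by exists k1.
by exists k0 => // k Hk; apply: HP => X x /Hk /H01.
Qed.

Lemma eventually_mono {P Q : K -> Prop} :
  (forall k, P k -> Q k) -> eventually P -> eventually Q.
Proof. by move=> PQ HP k0; have [k Hk HPk] := HP k0; exists k => // k' /HPk /PQ. Qed.

Lemma eventually_and {P Q : K -> Prop} :
  eventually P -> eventually Q -> eventually (fun k => P k /\ Q k).
Proof.
move=> HP HQ k0; have [k1 Hk1 HPk] := HP k0; have [k2 Hk2 HQk] := HQ k1.
exists k2 => [X x /Hk2 /Hk1 // | k Hk]; split; last exact: HQk.
by apply: HPk => X x /Hk /Hk2.
Qed.

Lemma sat_qf_eventually {psi : formula S ar} e : quantifier_free psi ->
  eventually (fun k => sat (J k) e psi <-> sat I0 e psi).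
Proof.
elim: psi => [||t u|r args|X args|p IHp|p IHp q IHq|p IHp q IHq|p IHp q IHq|x p _|x p _]
  //= qf; try by apply: eventually_always.
- set t := fun i => eval e (args i).
  case: (classic (I0 X t)) => [HX|HnX].
    by apply: eventually_always => k; split=> // _; apply: (I0_meet X t).1.
  have [k1 Hk1] : exists k1, ~ J k1 X t.
    by apply: not_all_ex_not => H; apply/HnX/(I0_meet X t).2.
  by apply: (eventually_from k1) => k Hk; split=> // /Hk.
- by apply: eventually_mono (IHp qf) => k; tauto.
all: case: qf => qp qq; apply: eventually_mono (eventually_and (IHp qp) (IHq qq)) => k; tauto.
Qed.

Lemma sat_clause_meet (c : clause S ar) e : quantifier_free (cl_pre c) ->
  (forall k, sat (J k) e (clause_formula c)) -> sat I0 e (clause_formula c).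
Proof.
rewrite /clause_formula => qf; elim: (cl_vars c) e => [|x xs IHxs] e /= Hc; last first.
  by move=> a; apply: IHxs => k; apply: Hc.
move=> Hpre; apply/sat_var_atoms => a Ha; apply/I0_meet => k0.
have [k Hk Hagree] := sat_qf_eventually e qf k0.
have /sat_var_atoms Hatoms := Hc k ((Hagree k (fun _ _ => id)).2 Hpre).
exact: Hk (Hatoms a Ha).
Qed.

Lemma models_standard_chain_meet (phi : formula S ar) :
  standard phi -> (forall k, models (J k) phi) -> models I0 phi.
Proof.
move=> [cs [cs_qf phi_cs]] Hphi e; apply/phi_cs/sat_big_and.
move=> p /List.in_map_iff [c [<- Hc]]; apply: sat_clause_meet => [|k]; first exact: cs_qf.
have /sat_big_and := (phi_cs M (J k) e).1 (Hphi k e); apply.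
by apply/List.in_map_iff; exists c.
Qed.

End ChainMeet.

Section Approximants.
Context {A I : Type} {n : I -> nat} {F : forall i, nrel A (n i) -> nrel A (n i)}.
Hypothesis F_mono : forall i, monotone_op (F i).

Definition approxs (a : bord) : interp A n := fun i => approx (F i) a.

Lemma approxs_succ_sub b : sub_interp (approxs (osucc b)) (approxs b).
Proof.
elim: b => [|b IHb|J f IHf] i x //= Hx; first by apply: F_mono Hx; exact: IHb.
move=> j; apply: IHf; apply: F_mono Hx => y; exact.
Qed.

Lemma approxs_comparable c b :
  sub_interp (approxs c) (approxs b) \/ sub_interp (approxs b) (approxs c).
Proof.
elim: c b => [|c IHc|J f IHf] b; first by right.
- elim: b => [|b _|J g IHg]; first by left.
    by case: (IHc b) => H; [left|right] => i x; apply: F_mono; apply: H.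
  case: (classic (exists j, sub_interp (approxs (g j)) (approxs (osucc c)))).
    by case=> j Hj; right => i x Hx; apply: Hj (Hx j).
  move=> Hn; left => i x Hx j; case: (IHg j) => [Hsub | Hj]; first exact: Hsub.
  by case: Hn; exists j.
- case: (classic (exists j, sub_interp (approxs (f j)) (approxs b))).
    by case=> j Hj; left => i x Hx; apply: Hj (Hx j).
  move=> Hn; right => i x Hx j; case: (IHf j b) => [Hj | Hsub]; last exact: Hsub.
  by case: Hn; exists j.
Qed.

(* Witness: the limit indexed by the set of values of the approximants, which,
   unlike [bord] itself, is small enough to index an [olim]. *)
Lemma approxs_least : exists L, forall b, sub_interp (approxs L) (approxs b).
Proof.
pose vals := {T : interp A n | exists b, T = approxs b}.
have pick (s : vals) : {b | approxs b = sval s}.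
  by apply: constructive_indefinite_description; case: s => T [b Tb]; exists b.
exists (olim (fun s => sval (pick s))) => b i x.
move=> /(_ (exist _ (approxs b) (ex_intro _ b erefl))).
by case: pick => b' /= <-.
Qed.

Lemma approxs_least_fixed L : (forall b, sub_interp (approxs L) (approxs b)) ->
  forall i x, approxs L i x <-> F i (approxs L i) x.
Proof. by move=> L_least i x; split=> [/(L_least (osucc L))|/approxs_succ_sub]. Qed.

Lemma postfixed_sub_approxs (P : interp A n) :
  (forall i x, P i x -> F i (P i) x) -> forall b, sub_interp P (approxs b).
Proof.
move=> P_post; elim=> [|b IHb|J f IHf] i x Hx //=; last by move=> j; apply: IHf.
by apply: F_mono (P_post i x Hx); apply: IHb.
Qed.

Lemma gfp_approxs_meet (R : interp A n) : (forall i, is_gfp (F i) (R i)) ->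
  forall i x, R i x <-> forall b, approxs b i x.
Proof.
move=> R_gfp i x; split=> [Rx b | Hx].
  by apply: postfixed_sub_approxs Rx => j y /(proj1 (R_gfp j) y).
have [L L_least] := approxs_least.
exact: (proj2 (R_gfp i) _ (approxs_least_fixed L L_least i) x (Hx L)).
Qed.

End Approximants.

Arguments approxs {A I n} F a.

Theorem theorem4p29 (S : signature) (m : nat) (ar : 'I_m -> nat)
  (phi : formula S ar) (phi_std : standard phi) (phi_closed : closed_formula phi)
  (M : structure S)
  (F : forall i : 'I_m, nrel M (ar i) -> nrel M (ar i))
  (F_mono : forall i, monotone_op (F i))
  (R : forall i : 'I_m, nrel M (ar i))
  (R_gfp : forall i, is_gfp (F i) (R i))
  (step : forall a : bord,
     models (fun i => approx (F i) a) phi ->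
     models (fun i => approx (F i) (osucc a)) phi) :
  (forall a : bord, models (fun i => approx (F i) a) phi) /\ models R phi.
Proof.
have models_approxs : forall a, models (approxs F a) phi.
  elim=> [|a IHa|K f IHf].
  - by apply: (models_standard_chain_meet (fun k : Empty_set => match k with end));
      [case | case | exact: phi_std | case].
  - exact: step.
  - apply: (models_standard_chain_meet (fun k => approxs F (f k))) => //.
    by move=> k k'; apply: approxs_comparable.
split; first exact: models_approxs.
apply: (models_standard_chain_meet (approxs F)) => //.
- exact: (gfp_approxs_meet F_mono R R_gfp).
- exact: approxs_comparable.
Qed.
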